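(* Let $(A,\circ,-,\sqcup)$ be a minus-algebra with override, and let $F$ be a filter of the right normal band $(A,\circ)$. Then $F$ is prime (i.e. whenever $a\in F$ and $b\in A$, either $b\in F$ or $a-b\in F$) if and only if for all $a,b\in A$, $a\sqcup b\in F$ implies $a\in F$ or $b\in F$.
   Context: A minus-algebra $(A,\circ,-)$ satisfies: $x\circ y=y-(y-x)$; $(A,\circ)$ is a right normal band (semigroup with $x\circ x=x$, $(x\circ y)\circ z=(y\circ x)\circ z$); there is an element $0$ with $x-x=0$ for all $x$; $x\circ0=0\circ x=0$; $(x-y)\circ x=x-y$; $(x-y)\circ y=0$; $(x-y)\circ z=(x\circ z)-y$; and $s-x=t-x\ \&\ x\circ s=x\circ t\Rightarrow s=t$. A minus-algebra with override additionally has $\sqcup$ with $(x\sqcup y)-x=y-x$ and $x\circ(x\sqcup y)=x$. Define $f\lesssim g$ iff $g\circ f=f$. A filter of $(A,\circ)$ is a non-empty $F\subseteq A$ closed under $\circ$ with $a\in F$, $a\lesssim b\Rightarrow b\in F$. *)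

Record minus_algebra_override := MinusAlgebraOverride {
  carrier :> Type;
  comp : carrier -> carrier -> carrier;
  minus : carrier -> carrier -> carrier;
  ovr : carrier -> carrier -> carrier;
  zero : carrier;
  comp_def : forall x y, comp x y = minus y (minus y x);
  comp_assoc : forall x y z, comp (comp x y) z = comp x (comp y z);
  comp_idem : forall x, comp x x = x;
  comp_right_normal : forall x y z, comp (comp x y) z = comp (comp y x) z;
  minus_self : forall x, minus x x = zero;
  comp_zero_r : forall x, comp x zero = zero;
  comp_zero_l : forall x, comp zero x = zero;
  minus_comp_l : forall x y, comp (minus x y) x = minus x y;
  minus_comp_r : forall x y, comp (minus x y) y = zero;
  minus_comp_dist : forall x y z, comp (minus x y) z = minus (comp x z) y;
  minus_cancel : forall x s t, minus s x = minus t x -> comp x s = comp x t -> s = t;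
  ovr_minus : forall x y, minus (ovr x y) x = minus y x;
  ovr_comp : forall x y, comp x (ovr x y) = x
}.

Section Defs.
Variable A : minus_algebra_override.

Definition lesssim (f g : A) : Prop := comp A g f = f.

Definition is_filter (F : A -> Prop) : Prop :=
  (exists a, F a) /\
  (forall a b, F a -> F b -> F (comp A a b)) /\
  (forall a b, F a -> lesssim a b -> F b).

Definition prime_filter (F : A -> Prop) : Prop :=
  forall a b, F a -> F b \/ F (minus A a b).
End Defs.


(* If [a |_| b] is in a prime filter [F], then either [a] is in [F] or
   [(a |_| b) - a = b - a] is, and [b - a <~ b] puts [b] in [F].  Conversely,
   every [a] splits as [a = (b o a) |_| (a - b)] with [b o a <~ b], so
   [a] in [F] forces [b] or [a - b] into [F]. *)

Section MinusAlgebraOverride.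
Variable A : minus_algebra_override.
Notation "x ** y" := (comp A x y) (at level 40).
Notation "x -- y" := (minus A x y) (at level 50).

Lemma comp_sandwich (x y : A) : x ** y = (y ** x) ** y.
Proof. now rewrite <- comp_right_normal, comp_assoc, comp_idem. Qed.

Lemma comp_lesssim (x y : A) : lesssim A (y ** x) y.
Proof. unfold lesssim. now rewrite <- comp_assoc, comp_idem. Qed.

Lemma minus_lesssim (u x : A) : lesssim A (u -- x) u.
Proof. unfold lesssim. now rewrite comp_sandwich, minus_comp_l, comp_idem. Qed.

Lemma minus_minus_idem (u x : A) : (u -- x) -- x = u -- x.
Proof.
  pose proof (minus_comp_dist A u x (u -- x)) as Hdist.
  now rewrite comp_idem, (minus_lesssim u x) in Hdist.
Qed.

Lemma minus_comp_absorb (u y : A) : u -- (y ** u) = u -- y.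
Proof. now rewrite (comp_def A y u), <- comp_def, minus_comp_l. Qed.

Lemma ovr_minus_below (x a : A) : x ** a = x -> ovr A x (a -- x) = a.
Proof.
  intros Hxa. apply (minus_cancel A x).
  - now rewrite ovr_minus, minus_minus_idem.
  - now rewrite ovr_comp.
Qed.

Lemma ovr_comp_minus (a b : A) : ovr A (b ** a) (a -- b) = a.
Proof.
  rewrite <- (minus_comp_absorb a b).
  apply ovr_minus_below.
  now rewrite comp_assoc, comp_idem.
Qed.

End MinusAlgebraOverride.

Theorem proposition3p13 (A : minus_algebra_override) (F : A -> Prop) :
  is_filter A F ->
  (prime_filter A F <-> (forall a b : A, F (ovr A a b) -> F a \/ F b)).
Proof.
  intros [_ [_ Hup]]. split.
  - intros Hprime a b Hab.
    destruct (Hprime _ a Hab) as [Ha | Hba]; [now left | right].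
    rewrite ovr_minus in Hba.
    exact (Hup _ _ Hba (minus_lesssim A b a)).
  - intros Hsplit a b Ha.
    rewrite <- (ovr_comp_minus A a b) in Ha.
    destruct (Hsplit _ _ Ha) as [Hba | Hab]; [left | now right].
    exact (Hup _ _ Hba (comp_lesssim A a b)).
Qed.
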